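(* Let $G\le\mathcal{S}_n$ be a $2$-homogeneous group such that the setwise stabiliser in $G$ of a $2$-subset of $\Omega$ is transitive on the remaining $n-2$ points. Then the stabiliser in $G$ of a point $p$ is transitive on the $2$-subsets of $\Omega$ not containing $p$.
   Context: $\Omega=\{1,\ldots,n\}$; $G$ is $2$-homogeneous if it is transitive on the $2$-element subsets of $\Omega$. *)

From mathcomp Require Import all_boot all_fingroup.
Set Implicit Arguments. Unset Strict Implicit. Unset Printing Implicit Defensive.

(* Omega = 'I_n (points 0..n-1); permutation groups are subgroups of 'S_n,
   acting naturally via the action 'P, and on subsets via 'P^*. *)

Definition two_subsets (n : nat) : {set {set 'I_n}} :=
  [set A : {set 'I_n} | #|A| == 2].

Definition two_homogeneous (n : nat) (G : {group 'S_n}) : Prop :=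
  [transitive G, on two_subsets n | 'P^*].

Definition two_subsets_avoiding (n : nat) (p : 'I_n) : {set {set 'I_n}} :=
  [set B in two_subsets n | p \notin B].

From mathcomp Require Import all_boot all_fingroup.

Set Implicit Arguments. Unset Strict Implicit. Unset Printing Implicit Defensive.

(* Given 2-subsets B, C avoiding p, 2-homogeneity gives g with B^g = C; then
   p^g lies outside C, and the stabiliser of C, being transitive on the points
   outside C, contains h with p^g^h = p.  So gh fixes p and maps B to C. *)

Section PointStabiliserOnAvoidingSets.

Variables (aT : finGroupType) (T : finType) (to : {action aT &-> T}).
Variables (G : {group aT}) (S : {set {set T}}).
Hypothesis transG : [transitive G, on S | to^*].
Hypothesis transN : forall C, C \in S -> [transitive 'N_G(C | to), on ~: C | to].

Lemma mem_setact_act (x : T) (B : {set T}) (a : aT) :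
  (to x a \in to^* B a) = (x \in B).
Proof. by rewrite setactE (mem_imset _ _ (act_inj to a)). Qed.

Lemma avoiding_in_orbit_astab1 (p : T) (B C : {set T}) :
  B \in S -> C \in S -> p \notin B -> p \notin C ->
  C \in orbit to^* 'C_G[p | to] B.
Proof.
move=> SB SC pB pC.
have [g Gg defC] := atransP2 transG SB SC.
have pgC : to p g \in ~: C by rewrite inE defC mem_setact_act.
have p_notC : p \in ~: C by rewrite inE.
have [h /setIP[Gh NCh] pgh] := atransP2 (transN SC) pgC p_notC.
apply/orbitP; exists (g * h)%g; last by rewrite actM -defC; apply: astabs_setact.
by rewrite inE groupM //; apply/astab1P; rewrite actM -pgh.
Qed.

Lemma atrans_astab1_avoiding (p : T) :
  [set B in S | p \notin B] != set0 ->
  [transitive 'C_G[p | to], on [set B in S | p \notin B] | to^*].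
Proof.
case/set0Pn=> B0; rewrite inE => /andP[SB0 pB0].
apply/imsetP; exists B0; first by rewrite inE SB0.
apply/setP=> C; apply/idP/idP.
  by rewrite inE => /andP[SC pC]; apply: avoiding_in_orbit_astab1.
case/orbitP=> a /setIP[Ga /astab1P pa] <-.
by rewrite inE (acts_act (atrans_acts transG)) // SB0 -{1}pa mem_setact_act.
Qed.

End PointStabiliserOnAvoidingSets.

Lemma two_subsets_avoiding_neq0 (n : nat) (p : 'I_n) :
  (2 < n)%N -> two_subsets_avoiding p != set0.
Proof.
move=> n_gt2.
have : (0 < #|[set B : {set 'I_n} | B \subset [set~ p] & #|B| == 2]|)%N.
  by rewrite cards_draws bin_gt0 cardsC1 card_ord -subn1 ltn_subRL.
case/card_gt0P=> B; rewrite inE => /andP[sBp B2].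
apply/set0Pn; exists B; rewrite !inE B2 /=.
by apply/negP => /(subsetP sBp); rewrite !inE eqxx.
Qed.

Theorem corollary3p3 (n : nat) (G : {group 'S_n}) :
  two_homogeneous G ->
  (forall A : {set 'I_n}, A \in two_subsets n ->
     [transitive 'N_G(A | 'P), on ~: A | 'P]) ->
  forall p : 'I_n,
    [transitive 'C_G[p | 'P], on two_subsets_avoiding p | 'P^*].
Proof.
move=> hom hN p.
have [A A2 _] := imsetP hom.
have [c cA _] := imsetP (hN A A2).
have n_gt2 : (2 < n)%N.
  move: A2; rewrite inE => /eqP A2.
  rewrite -(card_ord n) -(cardsC A) A2.
  by rewrite -[X in X < _]addn0 ltn_add2l card_gt0; apply/set0Pn; exists c.
exact: atrans_astab1_avoiding (two_subsets_avoiding_neq0 p n_gt2).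
Qed.
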